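(* Let $S_n=(E_{n-m},K_m)$ be a split graph on $n$ vertices such that each vertex $v$ of $K_m$ has degree at most $m$ in $S_n$ (i.e. the degree of $v$ is $m-1$ or $m$). Then $S_n$ is word-representable.
   Context: A graph $G=(V,E)$ is word-representable if there exists a word $w$ over the alphabet $V$ such that for all distinct $x,y\in V$, the letters $x$ and $y$ alternate in $w$ if and only if $xy\in E$ (alternation meaning that deleting all letters other than $x$ and $y$ leaves $xyxy\cdots$ or $yxyx\cdots$). The notation $S_n=(E_{n-m},K_m)$ denotes a split graph on $n$ vertices whose vertex set is partitioned into a maximal clique $K_m$ on $m$ vertices and an independent set $E_{n-m}$ on $n-m$ vertices (so each vertex of $E_{n-m}$ has degree at most $m-1$). *)

From mathcomp Require Import all_boot.
Set Implicit Arguments. Unset Strict Implicit. Unset Printing Implicit Defensive.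

Definition simple_graph (T : finType) (e : rel T) : Prop :=
  symmetric e /\ irreflexive e.

Definition nbhd (T : finType) (e : rel T) (v : T) : {set T} := [set u | e v u].
Definition degree (T : finType) (e : rel T) (v : T) : nat := #|nbhd e v|.

Definition is_clique (T : finType) (e : rel T) (K : {set T}) : Prop :=
  forall x y, x \in K -> y \in K -> x != y -> e x y.
Definition is_independent (T : finType) (e : rel T) (I : {set T}) : Prop :=
  forall x y, x \in I -> y \in I -> ~~ e x y.
Definition is_maximal_clique (T : finType) (e : rel T) (K : {set T}) : Prop :=
  is_clique e K /\ forall v, v \notin K -> ~ (forall x, x \in K -> e v x).

(* S_n = (E_{n-m}, K_m): vertex set partitioned into a maximal clique K and
   the independent set E = complement of K. *)
Definition split_partition (T : finType) (e : rel T) (K : {set T}) : Prop :=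
  is_maximal_clique e K /\ is_independent e (~: K).

Definition restrict2 (T : eqType) (w : seq T) (x y : T) : seq T :=
  [seq z <- w | (z == x) || (z == y)].

(* x and y alternate in w: the restriction to {x,y} has no two equal
   consecutive letters, i.e. it is xyxy... or yxyx... *)
Definition alternate (T : eqType) (w : seq T) (x y : T) : bool :=
  sorted (fun a b => a != b) (restrict2 w x y).

Definition represents (T : finType) (e : rel T) (w : seq T) : Prop :=
  (forall v : T, v \in w) /\
  (forall x y : T, x != y -> (alternate w x y <-> e x y)).

Definition word_representable (T : finType) (e : rel T) : Prop :=
  exists w : seq T, represents e w.

From mathcomp Require Import all_boot zify.
Set Implicit Arguments. Unset Strict Implicit. Unset Printing Implicit Defensive.

(* Since K is a clique, the degree bound leaves every vertex of K with at most
   one neighbour outside K.  Write each vertex u outside K as the block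
   u N(u) u, where N(u) lists its neighbours (all of them in K), and each vertex
   of K without an outside neighbour as a one-letter block.  In the
   concatenation of the blocks every vertex of K occurs exactly once, so
   appending a copy of its restriction to K makes any two vertices of K
   alternate.  An outside vertex u and a neighbour x then read u x u x, whereas
   a non-neighbour of u never occurs between the two letters u of its block. *)

Lemma alternateC (S : eqType) (w : seq S) x y : alternate w x y = alternate w y x.
Proof. by rewrite /alternate /restrict2; congr sorted; apply: eq_filter => z; rewrite orbC. Qed.

Lemma perm_filter_pred2 (S : eqType) (s : seq S) x y :
  x != y -> count_mem x s = 1 -> count_mem y s = 1 ->
  perm_eq [seq z <- s | (z == x) || (z == y)] [:: x; y].
Proof.
move=> nxy cx cy; apply/allP => z _; apply/eqP.
rewrite count_filter /= addn0.
rewrite (eq_count (a2 := fun t => (t == z) && ((z == x) || (z == y)))); last first.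
  by move=> t /=; case: eqP => // ->.
have [-> | zx] := eqVneq z x.
  by rewrite (eq_sym y) (negbTE nxy) -[RHS]/1 -cx; apply: eq_count => t; rewrite andbT.
have [-> | zy] := eqVneq z y.
  by rewrite -[RHS]/1 -cy; apply: eq_count => t; rewrite andbT.
by rewrite -[RHS]/0 -(count_pred0 s); apply: eq_count => t; rewrite andbF.
Qed.

Lemma alternate_cat_self (S : eqType) (s : seq S) x y :
  x != y -> count_mem x s = 1 -> count_mem y s = 1 -> alternate (s ++ s) x y.
Proof.
move=> nxy cx cy; rewrite /alternate /restrict2 filter_cat.
have pr := perm_filter_pred2 nxy cx cy.
move: (perm_size pr) (perm_uniq pr); rewrite /= inE nxy.
by case: [seq z <- s | _] => [|a [|b []]] //= _; rewrite inE andbT => nab; rewrite nab eq_sym nab.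
Qed.

Lemma filter_flatten_map_only (A S : eqType) (f : A -> seq S) (p : pred S) (s : seq A) a :
  uniq s -> a \in s -> (forall v z, v \in s -> z \in f v -> p z -> v = a) ->
  filter p (flatten (map f s)) = filter p (f a).
Proof.
move=> us sa only; case/splitPr: sa us only => s1 s2.
rewrite cat_uniq /= => /and3P [_ /norP [s1a _] /andP [s2a _]] only.
have filter_off t : {subset t <= s1 ++ a :: s2} -> a \notin t ->
    filter p (flatten (map f t)) = [::].
  move=> ts ta; apply/eqP; rewrite -[_ == _]negbK -has_filter.
  apply/hasP => -[z /flatten_mapP [v vt zv] pz].
  by move: ta; rewrite -(only v z (ts v vt) zv pz) vt.
rewrite map_cat flatten_cat filter_cat /= filter_cat !filter_off ?cats0 // => v vt.
  by rewrite mem_cat inE vt !orbT.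
by rewrite mem_cat vt.
Qed.

Section SplitWord.

Variables (T : finType) (e : rel T) (K : {set T}).
Hypothesis independent_outside : is_independent e (~: K).
Hypothesis outer_nbr_unique : forall x u v,
  x \in K -> u \notin K -> v \notin K -> e u x -> e v x -> u = v.

Definition has_outer_nbr (x : T) : bool := [exists u, (u \notin K) && e u x].

Definition clique_nbrs (v : T) : seq T := [seq z <- enum T | (z \in K) && e v z].

Definition vertex_block (v : T) : seq T :=
  if v \in K then (if has_outer_nbr v then [::] else [:: v])
  else v :: clique_nbrs v ++ [:: v].

Definition block_word : seq T := flatten [seq vertex_block v | v <- enum T].

Definition split_word : seq T := block_word ++ [seq z <- block_word | z \in K].

Lemma uniq_clique_nbrs v : uniq (clique_nbrs v).
Proof. by rewrite filter_uniq ?enum_uniq. Qed.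

Lemma mem_clique_nbrs v z : (z \in clique_nbrs v) = (z \in K) && e v z.
Proof. by rewrite mem_filter mem_enum andbT. Qed.

Lemma vertex_block_outer u v : u \notin K -> u \in vertex_block v -> v = u.
Proof.
rewrite /vertex_block => uK; case: ifP => [_|_].
  by case: ifP => // _; rewrite inE => /eqP.
by rewrite inE mem_cat inE mem_clique_nbrs (negbTE uK) /= orbb => /eqP.
Qed.

Lemma vertex_block_clique x v : x \in K -> x \in vertex_block v ->
  (v \notin K) && e v x || (v == x) && ~~ has_outer_nbr x.
Proof.
rewrite /vertex_block => xK; case: ifP => [vK|/negbT vK].
  by case: ifP => // hv; rewrite inE => /eqP ->; rewrite eqxx hv orbT.
have xv : x != v by apply: contraNneq vK => <-.
by rewrite inE mem_cat inE mem_clique_nbrs xK (negbTE xv) /= orbF => ->.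
Qed.

Lemma vertex_block_clique_outer x u v :
  x \in K -> u \notin K -> e u x -> x \in vertex_block v -> v = u.
Proof.
move=> xK uK eux /(vertex_block_clique xK) /orP [/andP [vK evx] | /andP [_]].
  exact: (outer_nbr_unique xK vK uK).
by case/existsP; exists u; rewrite uK.
Qed.

Lemma vertex_block_clique_alone x v :
  x \in K -> ~~ has_outer_nbr x -> x \in vertex_block v -> v = x.
Proof.
move=> xK alone /(vertex_block_clique xK) /orP [/andP [vK evx] | /andP [/eqP //]].
by case/existsP: alone; exists v; rewrite vK.
Qed.

Lemma filter_block_word (p : pred T) a :
  (forall v z, z \in vertex_block v -> p z -> v = a) ->
  filter p block_word = filter p (vertex_block a).
Proof.
move=> only; apply: filter_flatten_map_only; rewrite ?enum_uniq ?mem_enum //.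
by move=> v z _; apply: only.
Qed.

Lemma filter_block_word_clique x : x \in K -> filter (pred1 x) block_word = [:: x].
Proof.
move=> xK; have [/existsP [u /andP [uK eux]] | alone] := boolP (has_outer_nbr x).
  rewrite (@filter_block_word _ u) => [|v z /[swap] /eqP ->]; last first.
    exact: vertex_block_clique_outer xK uK eux.
  have ux : u != x by apply: contraNneq uK => ->.
  rewrite /vertex_block (negbTE uK) /= filter_cat /= (negbTE ux) cats0.
  by rewrite filter_pred1_uniq ?uniq_clique_nbrs ?mem_clique_nbrs ?xK.
rewrite (@filter_block_word _ x) => [|v z /[swap] /eqP ->]; last first.
  exact: vertex_block_clique_alone.
by rewrite /vertex_block xK (negbTE alone) /= eqxx.
Qed.

Lemma count_block_word_clique x : x \in K -> count_mem x block_word = 1.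
Proof. by move=> xK; rewrite -size_filter filter_block_word_clique. Qed.

Lemma mem_split_word v : v \in split_word.
Proof.
rewrite mem_cat; apply/orP; left; have [vK | vK] := boolP (v \in K).
  by rewrite -has_pred1 has_count count_block_word_clique.
apply/flatten_mapP; exists v; first by rewrite mem_enum.
by rewrite /vertex_block (negbTE vK) mem_head.
Qed.

Lemma split_word_alt_clique x y :
  x \in K -> y \in K -> x != y -> alternate split_word x y.
Proof.
move=> xK yK nxy.
have -> : alternate split_word x y = alternate (block_word ++ block_word) x y.
  rewrite /alternate /restrict2 !filter_cat -filter_predI; congr (sorted _ (_ ++ _)).
  by apply: eq_filter => z /=; apply: andb_idr => /orP [] /eqP ->.
by apply: alternate_cat_self; rewrite ?count_block_word_clique.
Qed.

Lemma restrict2_vertex_block_outer u y : u \notin K ->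
  restrict2 (vertex_block u) u y = u :: [seq z <- clique_nbrs u | z == y] ++ [:: u].
Proof.
move=> uK; rewrite /restrict2 /vertex_block (negbTE uK) /= eqxx filter_cat /= eqxx.
congr (_ :: _ ++ _); apply: eq_in_filter => z; rewrite mem_clique_nbrs => /andP [zK _].
by have /negbTE -> : z != u by apply: contraNneq uK => <-.
Qed.

Lemma split_word_alt_edge u x :
  u \notin K -> x \in K -> e u x -> alternate split_word u x.
Proof.
move=> uK xK eux; have ux : u != x by apply: contraNneq uK => ->.
rewrite /alternate /restrict2 /split_word filter_cat -filter_predI.
have -> : [seq z <- block_word | ((z == u) || (z == x)) && (z \in K)] = [:: x].
  rewrite -(filter_block_word_clique xK); apply: eq_filter => z /=.
  case: eqP => [->|_] /=; first by rewrite (negbTE uK) (negbTE ux).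
  by apply: andb_idr => /eqP ->.
rewrite (@filter_block_word _ u) => [|v z zv /orP [] /eqP zE]; first last.
- by apply: (vertex_block_clique_outer xK uK eux); rewrite -zE.
- by apply: (vertex_block_outer uK); rewrite -zE.
rewrite -/(restrict2 _ u x) restrict2_vertex_block_outer //.
by rewrite filter_pred1_uniq ?uniq_clique_nbrs ?mem_clique_nbrs ?xK //= ux eq_sym ux.
Qed.

Lemma split_word_not_alt u y : u \notin K -> ~~ e u y -> ~~ alternate split_word u y.
Proof.
move=> uK euy.
have block_u : [seq z <- vertex_block u | (z == u) || (z == y)] = [:: u; u].
  rewrite -/(restrict2 _ u y) restrict2_vertex_block_outer //.
  rewrite (@eq_in_filter _ _ pred0) ?filter_pred0 //.
  by move=> z; rewrite mem_clique_nbrs => /andP [_ euz] /=; apply: contraNF euy => /eqP <-.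
rewrite /alternate /restrict2 /split_word /block_word.
case/splitPr: (mem_enum T u) => s1 s2.
rewrite map_cat flatten_cat /= !filter_cat block_u -!catA /=.
by apply/negP => /cat_sorted2 [_] /=; rewrite eqxx.
Qed.

Lemma split_word_alt_outer u y : u \notin K -> alternate split_word u y = e u y.
Proof.
move=> uK; have [euy | neuy] := boolP (e u y); last exact/negbTE/split_word_not_alt.
apply: split_word_alt_edge => //; apply: contraTT euy => yK.
by apply: independent_outside; rewrite inE.
Qed.

End SplitWord.

Lemma clique_outer_nbr_unique (T : finType) (e : rel T) (K : {set T}) :
  symmetric e -> is_clique e K -> (forall x, x \in K -> degree e x <= #|K|) ->
  forall x u v, x \in K -> u \notin K -> v \notin K -> e u x -> e v x -> u = v.
Proof.
move=> sym cliqueK deg x u v xK uK vK eux evx; apply/eqP/contraT => uv.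
set N := nbhd e x.
have inside : K :\ x \subset N :&: K.
  apply/subsetP => z; rewrite !inE => /andP [zx zK]; rewrite zK andbT.
  by apply: cliqueK; rewrite // eq_sym.
have outside : [set u; v] \subset N :\: K.
  by apply/subsetP => z; rewrite !inE => /orP [] /eqP ->; rewrite ?uK ?vK sym.
have := cardsID K N; have := deg x xK; rewrite /degree -/N.
have := subset_leq_card inside; have := subset_leq_card outside.
rewrite cards2 uv (cardsD1 x K) xK; lia.
Qed.

Theorem theorem10 (T : finType) (e : rel T) (K : {set T}) :
  simple_graph e ->
  split_partition e K ->
  (forall v, v \in K -> degree e v <= #|K|) ->
  word_representable e.
Proof.
move=> [sym _] [[cliqueK _] indep] deg.
have nbr_unique := clique_outer_nbr_unique sym cliqueK deg.
exists (split_word e K); split=> [v | x y xy]; first exact: mem_split_word.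
have [xK | xK] := boolP (x \in K); last by rewrite split_word_alt_outer.
have [yK | yK] := boolP (y \in K); last by rewrite alternateC sym split_word_alt_outer.
by split=> _; [apply: cliqueK | apply: split_word_alt_clique].
Qed.
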